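(* For every $0<\delta<0.5$, every $\epsilon>0$ and every $\epsilon'>0$ there exist a domain of databases and a Bayesian inference problem (a prior and a likelihood) on it such that: (i) the mechanism that outputs a single sample from the posterior distribution $p(\theta\mid D)$ is $(\epsilon,\delta)$-differentially private; but (ii) when performing approximate sampling by running SGLD on the database, there is a number of steps $T$ such that the mechanism that outputs the SGLD iterate after $T$ iterations is not $(\epsilon'',\delta)$-differentially private for any $\epsilon''<\epsilon'$.
   Context: A randomized algorithm $M$ mapping databases to outputs is $(\epsilon,\delta)$-differentially private if for all measurable sets $S$ of outputs and all neighboring databases $D,\hat D$ (databases differing in a single record, i.e. at Hamming distance at most 1), $\Pr[M(D)\in S]\le e^{\epsilon}\Pr[M(\hat D)\in S]+\delta$. Stochastic Gradient Langevin Dynamics (SGLD) for a prior $p(\theta)$, likelihood $p(y\mid\theta)$ and database $\{y_1,\dots,y_n\}$ with batch size $b$ and step sizes $\eta_j$ starts from an initial $\theta_0$ and iterates $\theta_{j+1}=\theta_j+\frac{\eta_j}{2}\big[\nabla_\theta\ln p(\theta_j)+\frac{n}{b}\sum_{i\in B_j}\nabla_\theta\ln p(y_i\mid\theta_j)\big]+\sqrt{\eta_j}\,\xi_j$, with $\xi_j\sim\mathcal N(0,1)$ independent. The variant considered is cyclic SGLD: the database is randomly shuffled once and the samples (batch size 1) are then used cyclically in that order. *)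

From HB Require Import structures.
From mathcomp Require Import all_boot all_order all_algebra.
From mathcomp Require Import fingroup perm.
From mathcomp Require Import all_classical all_reals all_analysis.
Set Implicit Arguments. Unset Strict Implicit. Unset Printing Implicit Defensive.
Import Order.TTheory GRing.Theory Num.Theory.
Import numFieldNormedType.Exports.
Local Open Scope classical_set_scope.
Local Open Scope ring_scope.

Section SGLD_defs.
Context {R : realType}.

(* Databases of size n.+1 over a record type Y: functions 'I_n.+1 -> Y.
   Neighbouring = Hamming distance at most 1. *)
Definition neighbors (Y : Type) (n : nat) (D D' : 'I_n.+1 -> Y) : Prop :=
  exists i : 'I_n.+1, forall j, j != i -> D j = D' j.

(* A mechanism is given by its output law: M D S = Pr[M(D) \in S]. *)
Definition dp (Y : Type) (n : nat) (M : ('I_n.+1 -> Y) -> set R -> R)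
  (eps delta : R) : Prop :=
  forall D D' : 'I_n.+1 -> Y, neighbors D D' ->
  forall S : set R, measurable S -> M D S <= expR eps * M D' S + delta.

Definition post_dens (Y : Type) (n : nat) (p : R -> R) (l : Y -> R -> R)
  (D : 'I_n.+1 -> Y) (t : R) : R :=
  p t * \prod_(i < n.+1) l (D i) t.

Definition posterior_prob (Y : Type) (n : nat) (p : R -> R) (l : Y -> R -> R)
  (D : 'I_n.+1 -> Y) (S : set R) : R :=
  fine (\int[lebesgue_measure]_(x in S) (post_dens p l D x)%:E)%E /
  fine (\int[lebesgue_measure]_x (post_dens p l D x)%:E)%E.

Definition bayes_problem (Y : Type) (n : nat) (p : R -> R) (l : Y -> R -> R)
  : Prop :=
  ((forall t, 0 < p t) /\ (forall y t, 0 < l y t)) /\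
  [/\
      (forall t, derivable (fun x => ln (p x)) t 1) /\
        continuous (derive1 (fun x => ln (p x))),
      (forall y, (forall t, derivable (fun x => ln (l y x)) t 1) /\
        continuous (derive1 (fun x => ln (l y x)))),
      (\int[lebesgue_measure]_x (p x)%:E = 1)%E &
      forall D : 'I_n.+1 -> Y,
        (0 < \int[lebesgue_measure]_x (post_dens p l D x)%:E)%E /\
        (\int[lebesgue_measure]_x (post_dens p l D x)%:E < +oo)%E].

(* One SGLD mean update with batch size 1 (so n/b = n.+1, the database
   size) on the record y, with step size e:
   theta + e/2 * (d/dtheta ln p(theta) + N * d/dtheta ln p(y|theta)). *)
Definition sgld_drift (Y : Type) (n : nat) (p : R -> R) (l : Y -> R -> R)
  (e : R) (y : Y) (t : R) : R :=
  t + e / 2 * (derive1 (fun x => ln (p x)) t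
               + n.+1%:R * derive1 (fun x => ln (l y x)) t).

(* Cyclic SGLD with fixed shuffle s: the record used at step j is
   D (s (j mod N)).  sgld_reach k j t S = probability that, starting at
   step index j from theta_j = t, after k more SGLD steps the iterate lies
   in S; theta_{j+1} ~ N(drift_j(theta_j), eta_j) (std dev sqrt eta_j). *)
Fixpoint sgld_reach (Y : Type) (n : nat) (p : R -> R) (l : Y -> R -> R)
  (eta : nat -> R) (D : 'I_n.+1 -> Y) (s : 'S_n.+1) (S : set R)
  (k j : nat) (t : R) : \bar R :=
  match k with
  | 0 => (\1_S t)%:E
  | k'.+1 =>
      (\int[normal_prob
              (@sgld_drift Y n p l (eta j) (D (s (inord (j %% n.+1)))) t)
              (Num.sqrt (eta j))]_x
         @sgld_reach Y n p l eta D s S k' j.+1 x)%E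
  end.

(* Pr[theta_T \in S] for cyclic SGLD started at theta0, the shuffle being
   uniformly random over the (n.+1)! permutations. *)
Definition sgld_prob (Y : Type) (n : nat) (p : R -> R) (l : Y -> R -> R)
  (eta : nat -> R) (theta0 : R) (T : nat)
  (D : 'I_n.+1 -> Y) (S : set R) : R :=
  fine (\sum_(s : 'S_n.+1) sgld_reach p l eta D s S T 0 theta0)%E
  / (n.+1)`!%:R.

End SGLD_defs.

(* The likelihood exp (±c sin (K θ)) rescales the standard normal prior by a
   factor in [e^-c, e^c], whatever K is; so the posterior densities of two
   neighbouring databases are within a factor e^(2c) of each other and, after
   normalisation, posterior probabilities within a factor e^(4c) = e^ε.  SGLD,
   however, only sees the gradient ±c K cos (K θ), which is ±c K at θ0 = 0:
   one unit step from 0 gives N(±c K / 2, 1), and for K large these two laws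
   are nearly disjoint on [0, +oo), which rules out any (ε'', δ)-guarantee
   with ε'' < ε' and δ < 1. *)

From HB Require Import structures.
From mathcomp Require Import all_boot all_order all_algebra.
From mathcomp Require Import fingroup perm.
From mathcomp Require Import all_classical all_reals all_analysis.
From mathcomp Require Import ring lra measurable_realfun normal_distribution.
Set Implicit Arguments. Unset Strict Implicit. Unset Printing Implicit Defensive.
Import Order.TTheory GRing.Theory Num.Theory.
Import numFieldNormedType.Exports.
Local Open Scope classical_set_scope.
Local Open Scope ring_scope.

Lemma ler_div_scale_sqr (R : realFieldType) (a b c e k : R) :
  0 <= k -> 0 < b -> 0 < e -> 0 <= c -> a <= k * c -> e <= k * b ->
  a / b <= k ^+ 2 * (c / e).
Proof.
move=> k0 b0 e0 c0 ac eb.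
apply: (@le_trans _ _ (k * c / b)); first by rewrite ler_wpM2r // invr_ge0 ltW.
have -> : k ^+ 2 * (c / e) = (k * c / b) * (k * b / e) by field; rewrite !gt_eqF.
rewrite -[leLHS]mulr1 ler_wpM2l ?ler_pdivlMr ?mul1r //.
by rewrite mul0r mulr_ge0.
Qed.

Section integral_comparison.
Context d (T : measurableType d) (R : realType) (mu : {measure set T -> \bar R}).
Variables (f g : T -> R) (k : R).
Hypotheses (k_ge0 : 0 <= k) (f_ge0 : forall x, 0 <= f x) (g_ge0 : forall x, 0 <= g x).
Hypotheses (mf : measurable_fun setT f) (mg : measurable_fun setT g).

Lemma ge0_integral_le_scale (A : set T) : measurable A ->
  (forall x, A x -> f x <= k * g x) ->
  (\int[mu]_(x in A) (f x)%:E <= k%:E * \int[mu]_(x in A) (g x)%:E)%E.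
Proof.
move=> mA fg; rewrite -ge0_integralZl_EFin //.
- apply: ge0_le_integral => //.
  + by move=> x _; rewrite lee_fin.
  + by apply/measurable_funTS/measurable_EFinP.
  + by apply/measurable_funeM/measurable_funTS/measurable_EFinP.
- by move=> x _; rewrite lee_fin.
- by apply/measurable_funTS/measurable_EFinP.
Qed.

Lemma fine_integral_le_scale (A : set T) : measurable A ->
  (forall x, A x -> f x <= k * g x) -> (\int[mu]_(x in A) (g x)%:E < +oo)%E ->
  fine (\int[mu]_(x in A) (f x)%:E)%E <= k * fine (\int[mu]_(x in A) (g x)%:E)%E.
Proof.
move=> mA fg gA_fin; have le_fg := ge0_integral_le_scale mA fg.
have gA_num : (\int[mu]_(x in A) (g x)%:E)%E \is a fin_num.
  by rewrite ge0_fin_numE // integral_ge0 // => x _; rewrite lee_fin.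
have kgA_num : (k%:E * \int[mu]_(x in A) (g x)%:E)%E \is a fin_num by rewrite fin_numM.
have fA_num : (\int[mu]_(x in A) (f x)%:E)%E \is a fin_num.
  rewrite ge0_fin_numE; last by apply: integral_ge0 => x _; rewrite lee_fin.
  by rewrite (le_lt_trans le_fg) // ltey_eq kgA_num.
by rewrite -[k in k * _]/(fine k%:E) -fineM // fine_le.
Qed.

End integral_comparison.

Section normalized_integral.
Context d (T : measurableType d) (R : realType) (mu : {measure set T -> \bar R}).

Definition normalized_integral (f : T -> R) (S : set T) : R :=
  fine (\int[mu]_(x in S) (f x)%:E)%E / fine (\int[mu]_x (f x)%:E)%E.

Variables (f g : T -> R) (k : R).
Hypotheses (k_ge0 : 0 <= k) (f_ge0 : forall x, 0 <= f x) (g_ge0 : forall x, 0 <= g x).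
Hypotheses (mf : measurable_fun setT f) (mg : measurable_fun setT g).
Hypotheses (f_le_kg : forall x, f x <= k * g x) (g_le_kf : forall x, g x <= k * f x).
Hypothesis g_gt0_lty : (0 < \int[mu]_x (g x)%:E < +oo)%E.

Lemma integral_gt0_lty_comparable : (0 < \int[mu]_x (f x)%:E < +oo)%E.
Proof.
have [g_pos g_fin] := andP g_gt0_lty.
apply/andP; split.
  rewrite lt_neqAle integral_ge0 ?andbT; last by move=> x _; rewrite lee_fin.
  apply/negP => /eqP f0; move: g_pos.
  have := ge0_integral_le_scale mu k_ge0 g_ge0 f_ge0 mg mf measurableT
    (fun x _ => g_le_kf x).
  by rewrite -f0 mule0 => /le_lt_trans/[apply]; rewrite ltxx.
apply: le_lt_trans (ge0_integral_le_scale mu k_ge0 f_ge0 g_ge0 mf mg measurableT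
  (fun x _ => f_le_kg x)) _.
by rewrite ltey_eq fin_numM // ge0_fin_numE // ltW.
Qed.

Lemma normalized_integral_le_scale S : measurable S ->
  normalized_integral f S <= k ^+ 2 * normalized_integral g S.
Proof.
move=> mS; have [g_pos g_fin] := andP g_gt0_lty.
have [f_pos f_fin] := andP integral_gt0_lty_comparable.
have gS_fin : (\int[mu]_(x in S) (g x)%:E < +oo)%E.
  apply: le_lt_trans g_fin; apply: ge0_subset_integral => //.
    exact/measurable_EFinP.
  by move=> x _; rewrite lee_fin.
have fS_le := fine_integral_le_scale k_ge0 f_ge0 g_ge0 mf mg mS
  (fun x _ => f_le_kg x) gS_fin.
have g_le := fine_integral_le_scale k_ge0 g_ge0 f_ge0 mg mf measurableT
  (fun x _ => g_le_kf x) f_fin.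
have f_gt0 : 0 < fine (\int[mu]_x (f x)%:E)%E by rewrite fine_gt0 // f_pos f_fin.
have g_gt0 : 0 < fine (\int[mu]_x (g x)%:E)%E by rewrite fine_gt0 // g_pos g_fin.
have gS_ge0 : 0 <= fine (\int[mu]_(x in S) (g x)%:E)%E.
  by rewrite fine_ge0 // integral_ge0 // => x _; rewrite lee_fin.
exact: ler_div_scale_sqr k_ge0 f_gt0 g_gt0 gS_ge0 fS_le g_le.
Qed.

End normalized_integral.

Section continuously_derivable.
Context {R : realType}.
Variables (f f' : R -> R).
Hypothesis f_is_derive : forall x : R, is_derive x (1 : R) f (f' x).

Lemma derive1_is_derive : derive1 f = f'.
Proof. by apply/funext => x; rewrite derive1E derive_val. Qed.

Lemma continuously_derivable : continuous f' ->
  (forall t, derivable f t 1) /\ continuous (derive1 f).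
Proof. by rewrite derive1_is_derive; split => // t; case: (f_is_derive t). Qed.

End continuously_derivable.

Section standard_gaussian.
Context {R : realType}.
Local Notation mu := (@lebesgue_measure R).

Lemma normal_pdf1E (m x : R) :
  normal_pdf m 1 x = normal_peak 1 * expR (- (x - m) ^+ 2 / 2).
Proof. by rewrite /normal_pdf oner_eq0 /normal_fun expr1n. Qed.

Lemma normal_pdf1_gt0 (m x : R) : 0 < normal_pdf m 1 x.
Proof. by rewrite normal_pdf1E mulr_gt0 ?expR_gt0 // normal_peak_gt0 ?oner_eq0. Qed.

Lemma is_derive_ln_normal_pdf1 (m x : R) :
  is_derive x 1 (fun t => ln (normal_pdf m 1 t)) (m - x).
Proof.
have -> : (fun t => ln (normal_pdf m 1 t)) =
    cst (ln (normal_peak 1)) + (- 2^-1) \*: (fun t => (t - m) ^+ 2).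
  apply/funext => t; rewrite normal_pdf1E lnM ?posrE ?normal_peak_gt0 ?oner_eq0 ?expR_gt0 //.
  by rewrite expRK !fctE /= mulNr mulrC -mulNr.
apply: is_derive_eq.
rewrite add0r subr0 !scaler1 -mulr2n scaleNr -[(x - m) *+ 2]scaler_nat scalerA.
by rewrite mulVf ?pnatr_eq0 // scale1r opprB.
Qed.

Lemma normal_prob1_le_expR (m : R) (A : set R) : measurable A ->
  (forall x, A x -> m * x <= 0) ->
  (normal_prob m 1 A <= (expR (- m ^+ 2 / 2))%:E)%E.
Proof.
move=> mA Am.
have pdf_le x : A x -> normal_pdf m 1 x <= expR (- m ^+ 2 / 2) * normal_pdf 0 1 x.
  move=> Ax; rewrite !normal_pdf1E mulrCA ler_wpM2l ?normal_peak_ge0 //.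
  by rewrite -expRD ler_expR subr0; have := Am x Ax; nra.
apply: le_trans (ge0_integral_le_scale mu (expR_ge0 _)
  (normal_pdf_ge0 m 1) (normal_pdf_ge0 0 1) (measurable_normal_pdf m 1)
  (measurable_normal_pdf 0 1) mA pdf_le) _.
rewrite -[leRHS]mule1 lee_wpmul2l ?lee_fin ?expR_ge0 //.
exact: (probability_le1 (normal_prob 0 1)).
Qed.

Lemma fine_normal_prob1_le_expR (m : R) (A : set R) : measurable A ->
  (forall x, A x -> m * x <= 0) -> fine (normal_prob m 1 A) <= expR (- m ^+ 2 / 2).
Proof.
by move=> mA Am; rewrite -lee_fin fineK ?fin_num_measure ?normal_prob1_le_expR.
Qed.

Lemma fine_normal_prob1_ge_expR (m : R) (A : set R) : measurable A ->
  (forall x, ~ A x -> m * x <= 0) -> 1 - expR (- m ^+ 2 / 2) <= fine (normal_prob m 1 A).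
Proof.
move=> mA Am; have := fine_normal_prob1_le_expR (measurableC mA) Am.
by rewrite probability_setC // fineB ?fin_num_measure //= lerBlDr addrC -lerBlDr.
Qed.

End standard_gaussian.

Section sine_likelihood.
Context {R : realType}.
Variables (c K : R).
Hypothesis c_ge0 : 0 <= c.
Local Notation mu := (@lebesgue_measure R).
Local Notation prior := (@normal_pdf R 0 1).

Definition sine_amplitude (y : bool) : R := if y then c else - c.

Definition sine_lik (y : bool) (t : R) : R := expR (sine_amplitude y * sin (K * t)).

Lemma is_derive_ln_sine_lik y (x : R) :
  is_derive x 1 (fun t => ln (sine_lik y t)) (sine_amplitude y * (cos (K * x) * K)).
Proof.
have -> : (fun t => ln (sine_lik y t)) = sine_amplitude y \*: (sin \o ( *%R K)).
  by apply/funext => t; rewrite /sine_lik expRK.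
apply: is_derive_eq.
by rewrite -[K%:A]/(K * 1) mulr1.
Qed.

Lemma continuous_sine_amplitude_cos y :
  continuous (fun x => sine_amplitude y * (cos (K * x) * K)).
Proof.
move=> x; apply: cvgMr; apply: cvgMl.
apply: (continuous_comp (f := fun x => K * x)); last exact: continuous_cos.
by apply: cvgMr; exact: cvg_id.
Qed.

Lemma sine_lik_bounds y t : expR (- c) <= sine_lik y t <= expR c.
Proof.
have /andP[sin_ge sin_le] : -1 <= sin (K * t) <= 1 by rewrite -ler_norml sin_max.
rewrite /sine_lik /sine_amplitude !ler_expR.
by have c0 := c_ge0; case: y; apply/andP; split; nra.
Qed.

Lemma continuous_sine_lik y : continuous (sine_lik y).
Proof.
move=> x; apply: continuous_comp; last exact: continuous_expR.
apply: cvgMr; apply: (continuous_comp (f := fun x => K * x)); last exact: continuous_sin.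
by apply: cvgMr; exact: cvg_id.
Qed.

Lemma post_dens_sine_likE (D : 'I_1 -> bool) :
  post_dens prior sine_lik D = (fun t => prior t * sine_lik (D ord0) t).
Proof. by apply/funext => t; rewrite /post_dens big_ord1. Qed.

Lemma measurable_post_dens_sine_lik (D : 'I_1 -> bool) :
  measurable_fun setT (post_dens prior sine_lik D).
Proof.
rewrite post_dens_sine_likE; apply: measurable_funM; first exact: measurable_normal_pdf.
by apply: continuous_measurable_fun; exact: continuous_sine_lik.
Qed.

Lemma post_dens_sine_lik_ge0 (D : 'I_1 -> bool) t : 0 <= post_dens prior sine_lik D t.
Proof. by rewrite post_dens_sine_likE mulr_ge0 ?normal_pdf_ge0 ?expR_ge0. Qed.

Lemma post_dens_sine_lik_le_prior (D : 'I_1 -> bool) t :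
  post_dens prior sine_lik D t <= expR c * prior t.
Proof.
have /andP[_ lik_le] := sine_lik_bounds (D ord0) t.
by rewrite post_dens_sine_likE mulrC ler_wpM2r ?normal_pdf_ge0.
Qed.

Lemma prior_le_post_dens_sine_lik (D : 'I_1 -> bool) t :
  prior t <= expR c * post_dens prior sine_lik D t.
Proof.
have /andP[lik_ge _] := sine_lik_bounds (D ord0) t.
rewrite post_dens_sine_likE mulrCA -[leLHS]mulr1 ler_wpM2l ?normal_pdf_ge0 //.
by rewrite -ler_pdivrMl ?expR_gt0 // mulr1 -expRN.
Qed.

Lemma post_dens_sine_lik_le (D D' : 'I_1 -> bool) t :
  post_dens prior sine_lik D t <= expR (2 * c) * post_dens prior sine_lik D' t.
Proof.
apply: le_trans (post_dens_sine_lik_le_prior D t) _.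
by rewrite mulr_natl mulr2n expRD -mulrA ler_wpM2l ?expR_ge0 ?prior_le_post_dens_sine_lik.
Qed.

Lemma integral_post_dens_sine_lik_gt0_lty (D : 'I_1 -> bool) :
  (0 < \int[mu]_x (post_dens prior sine_lik D x)%:E < +oo)%E.
Proof.
apply: (integral_gt0_lty_comparable (mu := mu) (expR_ge0 c) (post_dens_sine_lik_ge0 D)
  (normal_pdf_ge0 0 1) (measurable_post_dens_sine_lik D) (measurable_normal_pdf 0 1)
  (post_dens_sine_lik_le_prior D) (prior_le_post_dens_sine_lik D)).
by rewrite integral_normal_pdf lte01 ltry.
Qed.

Lemma bayes_problem_sine_lik : bayes_problem 0 prior sine_lik.
Proof.
split; first by split=> [t | y t]; [exact: normal_pdf1_gt0 | exact: expR_gt0].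
split.
- apply: continuously_derivable (is_derive_ln_normal_pdf1 0) _.
  by move=> x; apply: cvgB; [exact: cvg_cst | exact: cvg_id].
- move=> y; apply: continuously_derivable (is_derive_ln_sine_lik y) _.
  exact: continuous_sine_amplitude_cos.
- exact: integral_normal_pdf.
- by move=> D; apply/andP; exact: integral_post_dens_sine_lik_gt0_lty.
Qed.

Lemma dp_posterior_sine_lik (delta : R) : 0 <= delta ->
  dp (@posterior_prob R bool 0 prior sine_lik) (4 * c) delta.
Proof.
move=> delta_ge0 D D' _ S mS.
have -> : expR (4 * c) = expR (2 * c) ^+ 2 by rewrite -expRM_natr; congr expR; ring.
rewrite -[leLHS]addr0 lerD //.
exact: (normalized_integral_le_scale (mu := mu) (expR_ge0 _) (post_dens_sine_lik_ge0 D)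
  (post_dens_sine_lik_ge0 D') (measurable_post_dens_sine_lik D)
  (measurable_post_dens_sine_lik D') (post_dens_sine_lik_le D D')
  (post_dens_sine_lik_le D' D) (integral_post_dens_sine_lik_gt0_lty D') mS).
Qed.

Lemma sgld_prob_sine_lik y (S : set R) : measurable S ->
  sgld_prob prior sine_lik (fun=> 1) 0 1 (fun _ : 'I_1 => y) S =
  fine (normal_prob (sine_amplitude y * K / 2) 1 S).
Proof.
move=> mS; rewrite /sgld_prob /= (big_pred1 1%g); last first.
  by move=> s; apply/esym/eqP/permP => i; rewrite !ord1.
rewrite integral_indic //= setIT sqrtr1 divr1.
rewrite /sgld_drift (derive1_is_derive (is_derive_ln_normal_pdf1 0)).
rewrite (derive1_is_derive (is_derive_ln_sine_lik y)) mulr0 cos0.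
by congr (fine (normal_prob _ _ _)); ring.
Qed.

Lemma not_dp_sgld_sine_lik (e delta : R) : 0 <= K ->
  (1 + expR e) * expR (- (c * K / 2) ^+ 2 / 2) + delta < 1 ->
  ~ dp (@sgld_prob R bool 0 prior sine_lik (fun=> 1) 0 1) e delta.
Proof.
move=> K_ge0 small dpM.
have a_ge0 : 0 <= c * K / 2 by rewrite divr_ge0 ?mulr_ge0.
have nb : neighbors (fun _ : 'I_1 => true) (fun _ => false).
  by exists ord0 => j; rewrite ord1 eqxx.
have mS : measurable (`[0, +oo[%classic : set R) by exact: measurable_itv.
have := dpM _ _ nb _ mS; rewrite !sgld_prob_sine_lik //=.
have -> : - c * K / 2 = - (c * K / 2) by rewrite mulNr mulNr.
set a := c * K / 2 in small a_ge0 *; set q := expR (- a ^+ 2 / 2) in small *.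
have hi : 1 - q <= fine (normal_prob a 1 `[0, +oo[).
  apply: fine_normal_prob1_ge_expR mS _ => x /=.
  by rewrite in_itv /= andbT => /negP; rewrite -ltNge => x_lt0; nra.
have lo : fine (normal_prob (- a) 1 `[0, +oo[) <= q.
  rewrite /q -(sqrrN a); apply: fine_normal_prob1_le_expR mS _ => x /=.
  by rewrite in_itv /= andbT => x_ge0; nra.
have := ler_wpM2l (expR_ge0 e) lo; lra.
Qed.

End sine_likelihood.

Lemma exists_gaussian_shift_small_tail (R : realType) (eps' delta : R) :
  0 <= delta < 1 ->
  exists2 a : R, 0 <= a &
    forall e, e < eps' -> (1 + expR e) * expR (- a ^+ 2 / 2) + delta < 1.
Proof.
move=> /andP[delta_ge0 delta_lt1]; set q := (1 - delta) / (1 + expR eps').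
have E_gt0 : 0 < 1 + expR eps' by rewrite addr_gt0 ?expR_gt0.
have q_gt0 : 0 < q by rewrite divr_gt0 ?subr_gt0.
have q_le1 : q <= 1 by rewrite ler_pdivrMr // mul1r; have := expR_gt0 eps'; lra.
(* [a >= 1] gives [a ^+ 2 >= a >= - 2 * ln q], i.e. [expR (- a ^+ 2 / 2) <= q]. *)
set a := 1 - 2 * ln q.
have a_ge1 : 1 <= a by have := ln_le0 q_le1; rewrite /a; lra.
have tail_le_q : expR (- a ^+ 2 / 2) <= q.
  by rewrite -[leRHS]lnK ?posrE // ler_expR; rewrite /a in a_ge1 *; nra.
exists a => [|e e_lt]; first lra.
have E_lt : 1 + expR e < 1 + expR eps' by rewrite ltrD2l ltr_expR.
have qE : q * (1 + expR eps') = 1 - delta by rewrite /q divfK ?gt_eqF.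
have := ler_wpM2r (ltW q_gt0) (ltW E_lt); have := expR_ge0 e.
have := ler_wpM2l (ltW (expR_gt0 e)) tail_le_q; nra.
Qed.

Theorem theorem1 (R : realType) (delta eps eps' : R) :
  0 < delta < 2^-1 -> 0 < eps -> 0 < eps' ->
  exists (Y : Type) (n : nat) (p : R -> R) (l : Y -> R -> R),
    [/\ bayes_problem n p l,
        dp (@posterior_prob R Y n p l) eps delta &
        exists (eta : nat -> R) (theta0 : R) (T : nat),
          (forall j, 0 < eta j) /\
          forall eps'' : R, eps'' < eps' ->
            ~ dp (@sgld_prob R Y n p l eta theta0 T) eps'' delta].
Proof.
move=> /andP[delta_gt0 delta_lt] eps_gt0 _.
have delta_bounds : 0 <= delta < 1.
  by rewrite ltW //= (lt_trans delta_lt) // invf_lt1 ?ltr1n.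
have [a a_ge0 small_tail] := exists_gaussian_shift_small_tail eps' delta_bounds.
set c := eps / 4; have c_gt0 : 0 < c by rewrite divr_gt0.
exists bool, 0%N, (normal_pdf 0 1), (sine_lik c (2 * a / c)); split.
- exact: (bayes_problem_sine_lik _ (ltW c_gt0)).
- have -> : eps = 4 * c by rewrite /c; field.
  exact: (dp_posterior_sine_lik _ (ltW c_gt0) (ltW delta_gt0)).
- exists (fun=> 1), 0, 1%N; split => [j | e e_lt]; first exact: ltr01.
  apply: (not_dp_sgld_sine_lik (ltW c_gt0)).
    exact: divr_ge0 (mulr_ge0 (ler0n _ 2) a_ge0) (ltW c_gt0).
  have -> : c * (2 * a / c) / 2 = a by field; rewrite gt_eqF.
  exact: small_tail.
Qed.
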